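(* Let $P\subseteq\mathsf{Pos}(R)$, $\alpha\in\Sigma$, let $T$ be the transition tree of $P$, and let $v\in N^\odot(P,\alpha)$ be a node lying on a segment $s$ of $T$ with $v\neq\mathsf{top}(s)$ and $v\neq\mathsf{bot}(s)$. Then $\mathsf{left}(v)$ lies on $s$. Moreover, $v\in\tilde N^\odot(P,\alpha)$ unless either (a) $v$ is $\odot$-dominated by $\mathsf{top}(s)$, or (b) $\mathsf{first}(\mathsf{right}(v))\subseteq\mathsf{first}(\mathsf{top}(s))$ and $\mathsf{top}(s)$ is weakly $\odot$-dominated by some $\odot$-live node of $T$.
   Context: A regular expression $R$ over $\Sigma$ is identified with its parse tree; $\odot$-nodes $v$ have children $\mathsf{left}(v),\mathsf{right}(v)$. Positions are the character-labeled leaves, $\mathsf{Pos}_\alpha$ those labeled $\alpha$. $\mathsf{first}(v)$, $\mathsf{last}(v)$ are the sets of positions occurring first/last in a sequence of positions generated by the subexpression rooted at $v$; $\mathsf{firstextent}(p)=\{v:p\in\mathsf{first}(v)\}$, $\mathsf{lastextent}(p)=\{v:p\in\mathsf{last}(v)\}$, extended to sets by union. $N^\odot(P,\alpha)$ is the set of $\odot$-nodes $v$ with $\mathsf{left}(v)\in\mathsf{lastextent}(P)$ and $\mathsf{right}(v)\in\mathsf{firstextent}(\mathsf{Pos}_\alpha)$. A node $v$ is $\odot$-dominated by $u$ if $u$ is a proper ancestor of $v$ and $\mathsf{first}(\mathsf{right}(v))\subseteq\mathsf{first}(\mathsf{right}(u))$; $\tilde N^\odot(P,\alpha)$ is the set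 of $v\in N^\odot(P,\alpha)$ not $\odot$-dominated by any node of $N^\odot(P,\alpha)$. The transition tree $T$ of $P$ is the subtree induced by the nodes of $P$ and all their ancestors; a branching node of $T$ has two children in $T$; a segment of $T$ is a path from a leaf or branching node of $T$ up to the nearest branching node above it (or the root if none), with top node $\mathsf{top}(s)$ and bottom node $\mathsf{bot}(s)$. A node $v$ is $\odot$-live if it is a $\odot$-node with $\mathsf{left}(v)\in\mathsf{lastextent}(P)$. A node $v$ of $T$ is weakly $\odot$-dominated by $u$ if $u$ is $\odot$-live, $u$ is a proper ancestor of $v$, and $\mathsf{first}(v)\subseteq\mathsf{first}(\mathsf{right}(u))$. *)

From Stdlib Require Import List.
Import ListNotations.
Set Implicit Arguments.

Inductive re (A : Type) : Type :=
| Empty : re A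
| Eps : re A
| Chr : A -> re A
| Alt : re A -> re A -> re A
| Cat : re A -> re A -> re A        (* the concatenation operator, written (.) in the paper *)
| Star : re A -> re A.
Arguments Empty {A}. Arguments Eps {A}.

(* A node of the parse tree is identified by its address: the list of child
   directions read from the node UP to the root (false = left/only child,
   true = right child). *)
Definition addr := list bool.

Definition left (v : addr) : addr := false :: v.
Definition right (v : addr) : addr := true :: v.

Fixpoint subat A (R : re A) (p : addr) : option (re A) :=
  match p with
  | [] => Some R
  | b :: p' =>
    match subat R p' with
    | Some (Alt r1 r2) => Some (if b then r2 else r1)
    | Some (Cat r1 r2) => Some (if b then r2 else r1)
    | Some (Star r) => if b then None else Some r
    | _ => None
    end
  end.

Definition is_node A (R : re A) (v : addr) : Prop := subat R v <> None.

Definition is_pos A (R : re A) (p : addr) : Prop :=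
  exists a, subat R p = Some (Chr a).
Definition is_pos_of A (R : re A) (a : A) (p : addr) : Prop :=
  subat R p = Some (Chr a).

Definition is_cat A (R : re A) (v : addr) : Prop :=
  exists r1 r2, subat R v = Some (Cat r1 r2).

(* gen r p w : the sequence of positions w is generated by the subexpression r
   located at address p (positions are named by their addresses). *)
Inductive gen A : re A -> addr -> list addr -> Prop :=
| gen_eps p : gen Eps p []
| gen_chr a p : gen (Chr a) p [p]
| gen_altl r1 r2 p w : gen r1 (false :: p) w -> gen (Alt r1 r2) p w
| gen_altr r1 r2 p w : gen r2 (true :: p) w -> gen (Alt r1 r2) p w
| gen_cat r1 r2 p w1 w2 :
    gen r1 (false :: p) w1 -> gen r2 (true :: p) w2 -> gen (Cat r1 r2) p (w1 ++ w2)
| gen_star0 r p : gen (Star r) p []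
| gen_stars r p w1 w2 :
    gen r (false :: p) w1 -> gen (Star r) p w2 -> gen (Star r) p (w1 ++ w2).

Definition first A (R : re A) (v : addr) (x : addr) : Prop :=
  exists r w, subat R v = Some r /\ gen r v (x :: w).
Definition last A (R : re A) (v : addr) (x : addr) : Prop :=
  exists r w, subat R v = Some r /\ gen r v (w ++ [x]).

Definition subset_pos (X Y : addr -> Prop) : Prop := forall x, X x -> Y x.

Definition in_lastextent A (R : re A) (P : addr -> Prop) (v : addr) : Prop :=
  exists p, P p /\ last R v p.
Definition in_firstextent_Pos A (R : re A) (a : A) (v : addr) : Prop :=
  exists q, is_pos_of R a q /\ first R v q.

Definition anc (u v : addr) : Prop := exists w, v = w ++ u.
Definition proper_anc (u v : addr) : Prop := anc u v /\ u <> v.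

Definition inN A (R : re A) (P : addr -> Prop) (a : A) (v : addr) : Prop :=
  is_cat R v /\ in_lastextent R P (left v) /\ in_firstextent_Pos R a (right v).

Definition dominated A (R : re A) (v u : addr) : Prop :=
  is_cat R u /\ proper_anc u v /\ subset_pos (first R (right v)) (first R (right u)).

Definition inNtilde A (R : re A) (P : addr -> Prop) (a : A) (v : addr) : Prop :=
  inN R P a v /\ ~ (exists u, inN R P a u /\ dominated R v u).

Definition inT (P : addr -> Prop) (t : addr) : Prop := exists p, P p /\ anc t p.
Definition branching (P : addr -> Prop) (t : addr) : Prop :=
  inT P (left t) /\ inT P (right t).
Definition leafT (P : addr -> Prop) (t : addr) : Prop :=
  inT P t /\ ~ inT P (left t) /\ ~ inT P (right t).

Definition segment (P : addr -> Prop) (tp bt : addr) : Prop :=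
  (leafT P bt \/ branching P bt) /\ proper_anc tp bt /\
  (branching P tp \/ tp = []) /\
  (forall x, proper_anc tp x -> proper_anc x bt -> ~ branching P x).

Definition on_segment (tp bt v : addr) : Prop := anc tp v /\ anc v bt.

Definition live A (R : re A) (P : addr -> Prop) (v : addr) : Prop :=
  is_cat R v /\ in_lastextent R P (left v).

Definition weakly_dominated A (R : re A) (P : addr -> Prop) (t u : addr) : Prop :=
  live R P u /\ proper_anc u t /\ subset_pos (first R t) (first R (right u)).

From Stdlib Require Import List Lia.
Import ListNotations.
Set Implicit Arguments.

(* Addresses are read from a node up to the root, so the
   ancestors of a node form a chain, and below a proper ancestor [u] of [x]
   there is a unique child [b :: u] that is still an ancestor of [x].

   The only fact about the semantics of regular expressions that is needed is
   a descent property of [first]: if a position [x] is in [first n] and lies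
   below a descendant [m] of [n], then [x] is in [first m] and
   [first m] is contained in [first n] (lemma [first_descend]); it is proved
   one child at a time by induction on the generation relation.

   For the theorem, a node strictly inside a segment [s] cannot branch.  As
   [left v] is in the transition tree (it is in the last-extent of [P]), the
   path from [v] down to [bot s] must continue through [left v].  Next let
   [u] in [N(P, a)] dominate [v]; since [first (right v)] is nonempty, [v]
   lies below [right u].  Comparing [u] with [top s]: strictly inside [s] it
   would branch; equal to [top s] gives case (a); strictly above [top s]
   gives case (b) by the descent property applied below [right u]. *)

Lemma anc_refl (u : addr) : anc u u.
Proof. exists []. reflexivity. Qed.

Lemma anc_trans (u v w : addr) : anc u v -> anc v w -> anc u w.
Proof. intros [w1 ->] [w2 ->]. exists (w2 ++ w1). apply app_assoc. Qed.

Lemma anc_child (b : bool) (u : addr) : anc u (b :: u).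
Proof. exists [b]. reflexivity. Qed.

Lemma anc_length (u v : addr) : anc u v -> length u <= length v.
Proof. intros [w ->]. rewrite length_app. lia. Qed.

Lemma anc_antisym (u v : addr) : anc u v -> anc v u -> u = v.
Proof.
  intros [w ->] Hvu. apply anc_length in Hvu. rewrite length_app in Hvu.
  destruct w; [reflexivity | simpl in Hvu; lia].
Qed.

Lemma proper_anc_anc_trans (u v w : addr) :
  proper_anc u v -> anc v w -> proper_anc u w.
Proof.
  intros [Huv Hne] Hvw. split; [exact (anc_trans Huv Hvw) |].
  intros <-. exact (Hne (anc_antisym Huv Hvw)).
Qed.

Lemma anc_comparable (u t x : addr) : anc u x -> anc t x -> anc u t \/ anc t u.
Proof.
  intros [w1 ->] [w2 Heq].
  destruct (app_eq_app _ _ _ _ Heq) as [l [[_ Ht] | [_ Hu]]].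
  - left. exists l. exact Ht.
  - right. exists l. exact Hu.
Qed.

Lemma proper_anc_child (u x : addr) : proper_anc u x -> exists b, anc (b :: u) x.
Proof.
  intros [[w ->] Hne]. destruct w as [|c w']; [contradiction Hne; reflexivity |].
  destruct (exists_last (l := c :: w') ltac:(discriminate)) as [w [b ->]].
  exists b, w. rewrite <- app_assoc. reflexivity.
Qed.

Lemma child_toward_unique (b b' : bool) (u x : addr) :
  anc (b :: u) x -> anc (b' :: u) x -> b = b'.
Proof.
  intros [w ->] [w' Heq].
  change (w ++ [b] ++ u = w' ++ [b'] ++ u) in Heq.
  rewrite !app_assoc in Heq. apply app_inv_tail, app_inj_tail in Heq. tauto.
Qed.

Lemma not_anc_child_parent (b : bool) (u : addr) : ~ anc (b :: u) u.
Proof. intro H. apply anc_length in H. simpl in H. lia. Qed.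

Section FirstLast.
Variables (A : Type) (R : re A).

Lemma gen_below (r : re A) (n : addr) (w : list addr) :
  gen r n w -> forall x, In x w -> anc n x.
Proof.
  induction 1; intros x Hx; simpl in Hx;
    repeat match goal with H : In _ (_ ++ _) |- _ => apply in_app_or in H end;
    intuition (subst; eauto using anc_refl, anc_trans, anc_child).
Qed.

Lemma gen_first_step (r : re A) (n : addr) (l : list addr) :
  gen r n l -> forall x w b, l = x :: w -> anc (b :: n) x ->
  exists r', subat r [b] = Some r' /\ (exists w1, gen r' (b :: n) (x :: w1)) /\
    (forall y w', gen r' (b :: n) (y :: w') -> exists w'', gen r n (y :: w'')).
Proof.
  induction 1 as [p|c p|r1 r2 p l Hg _|r1 r2 p l Hg _|r1 r2 p l1 l2 Hg1 _ Hg2 _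
                 |r p|r p l1 l2 Hg1 _ Hg2 IH2];
    intros x w b Hl Hb; try discriminate.
  - injection Hl as -> _. contradiction (not_anc_child_parent Hb).
  - subst l. assert (b = false) as ->
      by exact (child_toward_unique Hb (gen_below Hg x (or_introl eq_refl))).
    exists r1. split; [reflexivity |]. split; [exists w; exact Hg |].
    intros y w' Hy. exists w'. now constructor.
  - subst l. assert (b = true) as ->
      by exact (child_toward_unique Hb (gen_below Hg x (or_introl eq_refl))).
    exists r2. split; [reflexivity |]. split; [exists w; exact Hg |].
    intros y w' Hy. exists w'. now apply gen_altr.
  - destruct l1 as [|x1 l1']; simpl in Hl.
    + subst l2. assert (b = true) as ->
        by exact (child_toward_unique Hb (gen_below Hg2 x (or_introl eq_refl))).
      exists r2. split; [reflexivity |]. split; [exists w; exact Hg2 |].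
      intros y w' Hy. exists w'. exact (gen_cat Hg1 Hy).
    + injection Hl as -> _. assert (b = false) as ->
        by exact (child_toward_unique Hb (gen_below Hg1 x (or_introl eq_refl))).
      exists r1. split; [reflexivity |]. split; [exists l1'; exact Hg1 |].
      intros y w' Hy. exists (w' ++ l2). exact (gen_cat Hy Hg2).
  - destruct l1 as [|x1 l1']; simpl in Hl.
    + destruct (IH2 x w b Hl Hb) as [r' [Hr' [Hw Hext]]].
      exists r'. split; [exact Hr' |]. split; [exact Hw |].
      intros y w' Hy. destruct (Hext y w' Hy) as [w'' Hw''].
      exists w''. exact (gen_stars Hg1 Hw'').
    + injection Hl as -> _. assert (b = false) as ->
        by exact (child_toward_unique Hb (gen_below Hg1 x (or_introl eq_refl))).
      exists r. split; [reflexivity |]. split; [exists l1'; exact Hg1 |].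
      intros y w' Hy. exists (w' ++ l2). exact (gen_stars Hy Hg2).
Qed.

Lemma first_below (n x : addr) : first R n x -> anc n x.
Proof. intros [r [w [_ Hg]]]. exact (gen_below Hg x (or_introl eq_refl)). Qed.

Lemma last_below (n x : addr) : last R n x -> anc n x.
Proof.
  intros [r [w [_ Hg]]]. apply (gen_below Hg x), in_or_app. right. now left.
Qed.

Lemma first_step (n x : addr) (b : bool) : first R n x -> anc (b :: n) x ->
  first R (b :: n) x /\ subset_pos (first R (b :: n)) (first R n).
Proof.
  intros [r [w [Hn Hg]]] Hb.
  destruct (gen_first_step Hg eq_refl Hb) as [r' [Hr' [[w1 Hw1] Hext]]].
  assert (Hbn : subat R (b :: n) = Some r') by (simpl; rewrite Hn; exact Hr').
  split; [exists r', w1; now split |].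
  intros y [r'' [w' [Hs Hy]]]. rewrite Hbn in Hs. injection Hs as <-.
  destruct (Hext y w' Hy) as [w'' Hw'']. exists r, w''. now split.
Qed.

Lemma first_descend (n m x : addr) : first R n x -> anc n m -> anc m x ->
  first R m x /\ subset_pos (first R m) (first R n).
Proof.
  intros Hx [c ->]. induction c as [|b c IH]; intros Hcx.
  - split; [exact Hx | intros y Hy; exact Hy].
  - destruct (IH (anc_trans (anc_child b _) Hcx)) as [Hcx' Hsub].
    destruct (first_step Hcx' Hcx) as [Hbx Hsub'].
    split; [exact Hbx | intros y Hy; exact (Hsub y (Hsub' y Hy))].
Qed.

End FirstLast.

Lemma inT_anc (P : addr -> Prop) (s t : addr) : inT P t -> anc s t -> inT P s.
Proof. intros [p [Hp Htp]] Hst. exists p. split; [exact Hp | exact (anc_trans Hst Htp)]. Qed.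

Lemma inT_lastextent (A : Type) (R : re A) (P : addr -> Prop) (n : addr) :
  in_lastextent R P n -> inT P n.
Proof. intros [p [Hp Hl]]. exists p. split; [exact Hp | exact (last_below Hl)]. Qed.

Lemma inT_live (A : Type) (R : re A) (P : addr -> Prop) (u : addr) :
  live R P u -> inT P (left u) /\ inT P u.
Proof.
  intros [_ Hl]. pose proof (inT_lastextent Hl) as HT.
  split; [exact HT | exact (inT_anc HT (anc_child _ _))].
Qed.

Lemma inT_bot (P : addr -> Prop) (tp bt : addr) : segment P tp bt -> inT P bt.
Proof.
  intros [[[H _] | [H _]] _]; [exact H | exact (inT_anc H (anc_child _ _))].
Qed.

Lemma segment_interior_right (P : addr -> Prop) (tp bt x : addr) :
  segment P tp bt -> proper_anc tp x -> proper_anc x bt ->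
  inT P (left x) -> ~ inT P (right x).
Proof. intros (_ & _ & _ & Hnb) Htx Hxb Hl Hr. exact (Hnb x Htx Hxb (conj Hl Hr)). Qed.

Lemma segment_continues_left (P : addr -> Prop) (tp bt v : addr) :
  segment P tp bt -> on_segment tp bt v -> v <> tp -> v <> bt ->
  inT P (left v) -> on_segment tp bt (left v).
Proof.
  intros Hseg [Htv Hvb] Hvt Hvb' Hl.
  assert (Htv' : proper_anc tp v) by (split; [exact Htv | congruence]).
  assert (Hvb'' : proper_anc v bt) by (split; [exact Hvb | congruence]).
  split; [exact (anc_trans Htv (anc_child _ _)) |].
  destruct (proper_anc_child Hvb'') as [[|] Hb]; [| exact Hb].
  contradiction (segment_interior_right Hseg Htv' Hvb'' Hl (inT_anc (inT_bot Hseg) Hb)).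
Qed.

(* A node dominating [v] has [v] below its right child, because
   [first (right v)] is nonempty. *)
Lemma dominator_right_of (A : Type) (R : re A) (v u q : addr) :
  dominated R v u -> first R (right v) q -> anc (right u) v.
Proof.
  intros (_ & Huv & Hsub) Hq.
  destruct (proper_anc_child Huv) as [b Hb].
  assert (Hq' : anc (right u) q) by exact (first_below (Hsub q Hq)).
  assert (Hvq : anc v q) by exact (anc_trans (anc_child _ _) (first_below Hq)).
  replace b with true in Hb; [exact Hb |].
  exact (child_toward_unique Hq' (anc_trans Hb Hvq)).
Qed.

(* A live node dominating [v] cannot lie strictly inside the segment of [v]:
   it would branch. *)
Lemma dominator_not_interior (A : Type) (R : re A) (P : addr -> Prop)
  (tp bt v u q : addr) :
  segment P tp bt -> proper_anc v bt -> inT P v ->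
  live R P u -> dominated R v u -> first R (right v) q -> ~ proper_anc tp u.
Proof.
  intros Hseg Hvb HTv Hlive Hdom Hq Htu.
  pose proof (dominator_right_of Hdom Hq) as Hru.
  destruct Hdom as (_ & Huv & _).
  apply (segment_interior_right Hseg Htu (proper_anc_anc_trans Huv (proj1 Hvb))).
  - exact (proj1 (inT_live Hlive)).
  - exact (inT_anc HTv Hru).
Qed.

(* A live node dominating [v] strictly above the top [tp] of its segment
   yields alternative (b): [tp] lies below its right child, so [first tp]
   lies between [first (right v)] and [first (right u)]. *)
Lemma dominator_above_top (A : Type) (R : re A) (P : addr -> Prop)
  (tp v u q : addr) :
  anc tp v -> live R P u -> dominated R v u -> first R (right v) q ->
  proper_anc u tp ->
  subset_pos (first R (right v)) (first R tp) /\
  exists u', inT P u' /\ live R P u' /\ weakly_dominated R P tp u'.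
Proof.
  intros Htv Hlive Hdom Hq Hut.
  pose proof (dominator_right_of Hdom Hq) as Hru.
  destruct Hdom as (_ & _ & Hsub).
  assert (Hrt : anc (right u) tp).
  { destruct (proper_anc_child Hut) as [b Hb].
    replace b with true in Hb; [exact Hb |].
    exact (child_toward_unique Hru (anc_trans Hb Htv)). }
  assert (Hbelow : forall x, first R (right v) x -> anc tp x)
    by (intros x Hx; exact (anc_trans Htv (anc_trans (anc_child _ _) (first_below Hx)))).
  split.
  - intros x Hx. exact (proj1 (first_descend (Hsub x Hx) Hrt (Hbelow x Hx))).
  - exists u. split; [exact (proj2 (inT_live Hlive)) |]. split; [exact Hlive |].
    split; [exact Hlive |]. split; [exact Hut |].
    exact (proj2 (first_descend (Hsub q Hq) Hrt (Hbelow q Hq))).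
Qed.

Unset Implicit Arguments.

Theorem lemma7 (A : Type) (R : re A) (P : addr -> Prop) (a : A)
  (tp bt v : addr)
  (HP : forall p, P p -> is_pos R p)
  (Hseg : segment P tp bt)
  (HvN : inN R P a v)
  (Hon : on_segment tp bt v)
  (Hvt : v <> tp) (Hvb : v <> bt) :
  on_segment tp bt (left v) /\
  (~ dominated R v tp ->
   ~ (subset_pos (first R (right v)) (first R tp) /\
      exists u, inT P u /\ live R P u /\ weakly_dominated R P tp u) ->
   inNtilde R P a v).
Proof.
  pose proof HvN as (Hcat & Hleft & [q [_ Hq]]).
  destruct (inT_live (conj Hcat Hleft)) as [HTl HTv].
  split; [exact (segment_continues_left Hseg Hon Hvt Hvb HTl) |].
  intros Hnot_a Hnot_b. split; [exact HvN |].
  intros [u [[Hcu [Hlu _]] Hdom]].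
  assert (Hlive : live R P u) by exact (conj Hcu Hlu).
  destruct Hon as [Htv Hvbt].
  destruct (anc_comparable (proj1 (proj1 (proj2 Hdom))) Htv) as [Hut | Htu].
  - destruct (list_eq_dec Bool.bool_dec u tp) as [<- | Hne]; [exact (Hnot_a Hdom) |].
    exact (Hnot_b (dominator_above_top Htv Hlive Hdom Hq (conj Hut Hne))).
  - destruct (list_eq_dec Bool.bool_dec tp u) as [<- | Hne]; [exact (Hnot_a Hdom) |].
    exact (dominator_not_interior Hseg (conj Hvbt Hvb) HTv Hlive Hdom Hq (conj Htu Hne)).
Qed.
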